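(* Let $\phi:X\to Y$ be a pure morphism of $\mathrm{Agg}^{\rm ctd}$, i.e. a composite of virtual edge and virtual loop contractions. Then $X$ may be identified with the total dissection $\mathrm{agg}(\mathbb{\Gamma}(\phi))$, $Y$ with the total contraction $\mathbb{\Gamma}(\phi)/\mathbb{\Gamma}(\phi)$, and $\phi$ with $\mathrm v_{\mathbb{\Gamma}(\phi)}=c_{\mathbb{\Gamma}(\phi)}\circ i_{\mathbb{\Gamma}(\phi)}$. Consequently any pure morphism of $\mathrm{Agg}^{\rm ctd}$ is uniquely determined by its ghost graph.
   Context: A graph $\Gamma=(F,V,\partial,\imath)$ consists of finite sets $F$ (flags) and $V$ (vertices), a map $\partial:F\to V$ and an involution $\imath$ of $F$. The two-element orbits of $\imath$ are the edges, the fixed points the outer flags. A graph morphism $\phi:\Gamma\to\Gamma'=(F',V',\partial',\imath')$ is a triple $(\phi_V,\phi^F,\imath_\phi)$ with $\phi_V:V\to V'$ surjective, $\phi^F:F'\to F$ injective and $\imath_\phi$ a fixed-point-free involution of $F\setminus\phi^F(F')$, such that: (i) $\phi_V\partial\phi^F=\partial'$ and $\phi_V\partial(f)=\phi_V\partial(\imath_\phi f)$ for $f\notin\phi^F(F')$; (ii) for $f\notin\phi^F(F')$, either $\{f,\imath f\}$ is an edge of $\Gamma$ and $\imath_\phi f=\imath f$, or $f$ and $\imath_\phi f$ are both outer flags of $\Gamma$; (iii) if $f'\in F'$ and $\phi^F(f')$ lies on an edge of $\Gamma$, then $\imath(\phi^F f')=\phi^F(\imath' f')$. Composition: $(\psi\phi)_V=\psi_V\phi_V$,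 $(\psi\phi)^F=\phi^F\psi^F$, $\imath_{\psi\phi}$ equals $\imath_\phi$ off $\phi^F(F')$ and $\phi^F\imath_\psi(\phi^F)^{-1}$ on $\phi^F(F'\setminus\psi^F(F''))$. The ghost graph of $\phi$ is $\mathbb{\Gamma}(\phi)=(F,V,\partial,\hat\imath_\phi)$, $\hat\imath_\phi$ extending $\imath_\phi$ by the identity on $\phi^F(F')$. A corolla $*_S$ has one vertex, flag set $S$, no edges; an aggregate is a graph with $\imath=\mathrm{id}$. The simple grafting of distinct outer flags $s,t$ is $(\mathrm{id},\mathrm{id},\emptyset)$ into the graph whose involution additionally exchanges $s,t$; the simple contraction $c_{\{s,t\}}$ of an edge is (quotient $V\to V/(\partial s\sim\partial t)$, inclusion $F\setminus\{s,t\}\hookrightarrow F$, $\imath_\phi(s)=t$). For distinct outer flags $s,t$ of an aggregate, the virtual edge contraction ${}_s\circ_t$ ($\partial s\ne\partial t$) resp. virtual loop contraction $\circ_{st}$ ($\partial s=\partial t$) is $c_{\{s,t\}}$ composed after the grafting of $s,t$. $\mathrm{Agg}^{\rm ctd}$ is the category of aggregates with morphisms generated by isomorphisms and virtual edge/loop contractions. For a graph $\Gamma$: the total dissection is $\mathrm{agg}(\Gamma)=(F,V,\partial,\mathrm{id})$; the total contraction $\Gamma/\Gamma$ is the aggregate whose vertices are the connected components of $\Gamma$ and whose flags are the outer flags of $\Gamma$, each attached to its component; $i_\Gamma:\mathrm{agg}(\Gamma)\to\Gamma$ is the composite of graftings of all edges, $c_\Gamma:\Gamma\to\Gamma/\Gamma$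 the composite of contractions of all edges, and $\mathrm v_\Gamma=c_\Gamma i_\Gamma$. *)

(* Graphs in the sense of Borisov--Manin / Kaufmann--Ward:
   flags F, vertices V, incidence map, involution on flags. *)
From mathcomp Require Import all_boot.

Record graph := Graph {
  gF : finType;
  gV : finType;
  gd : gF -> gV;
  gi : gF -> gF
}.

Arguments Graph {gF gV} gd gi.
Set Implicit Arguments. Unset Strict Implicit. Unset Printing Implicit Defensive.

Definition is_graph (G : graph) : Prop := forall f, gi G (gi G f) = f.

Definition is_aggregate (G : graph) : Prop := is_graph G /\ forall f, gi G f = f.

(* We store the
   involution imath_phi through its extension \hat\imath_phi by the identity on
   the image of phi^F (this is a bijective encoding of the partial involution). *)
Record morph (X Y : graph) := Morph {
  mV : gV X -> gV Y;
  mF : gF Y -> gF X;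
  mi : gF X -> gF X
}.

Arguments Morph {X Y}.
Arguments mV {X Y}.
Arguments mF {X Y}.
Arguments mi {X Y}.

Definition inim X Y (p : morph X Y) (f : gF X) : bool := [exists f', mF p f' == f].

Definition is_morph X Y (p : morph X Y) : Prop :=
  [/\ (forall y, exists x, mV p x = y),
      injective (mF p),
      (forall f, mi p (mi p f) = f),
      (forall f, inim p f -> mi p f = f) &
      [/\ (forall f, ~~ inim p f -> mi p f != f),
          (forall f', mV p (gd X (mF p f')) = gd Y f'),
          (forall f, ~~ inim p f -> mV p (gd X f) = mV p (gd X (mi p f))),
          (forall f, ~~ inim p f ->
              (gi X f != f /\ mi p f = gi X f) \/ (gi X f = f /\ gi X (mi p f) = mi p f)) &
          (forall f', gi X (mF p f') != mF p f' ->
              gi X (mF p f') = mF p (gi Y f'))]].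

Definition is_iso X Y (p : morph X Y) : Prop :=
  [/\ is_morph p, bijective (mV p) & bijective (mF p)].

Definition mid (X : graph) : morph X X := Morph (fun v => v) (fun f => f) (fun f => f).

Definition mcomp X Y Z (q : morph Y Z) (p : morph X Y) : morph X Z :=
  Morph (fun v => mV q (mV p v)) (fun f => mF p (mF q f))
        (fun f => match [pick f' | mF p f' == f] with
                  | Some f' => mF p (mi q f')
                  | None => mi p f
                  end).

Definition ghost X Y (p : morph X Y) : graph := Graph (gd X) (mi p).

Definition agg (G : graph) : graph := Graph (gd G) (fun f => f).

Definition swap (T : eqType) (s t : T) (f : T) : T :=
  if f == s then t else if f == t then s else f.

Definition graft (G : graph) (s t : gF G) : graph :=
  Graph (gd G) (fun f => if (f == s) || (f == t) then swap s t f else gi G f).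

Definition graft_m (G : graph) (s t : gF G) : morph G (graft s t) :=
  @Morph G (graft s t) (fun v : gV G => v) (fun f : gF G => f) (fun f : gF G => f).

Definition cF (G : graph) (s t : gF G) := {f : gF G | (f != s) && (f != t)}.
(* V / (d s ~ d t), represented by the vertices other than d t (unless d s = d t) *)
Definition cV (G : graph) (s t : gF G) := {v : gV G | (v != gd G t) || (gd G s == gd G t)}.

Lemma cV_ds (G : graph) (s t : gF G) : (gd G s != gd G t) || (gd G s == gd G t).
Proof. by case: eqP. Qed.

Definition cproj (G : graph) (s t : gF G) (v : gV G) : cV s t :=
  insubd (exist _ (gd G s) (cV_ds s t) : cV s t)
         (if v == gd G t then gd G s else v).

Definition contract (G : graph) (s t : gF G) : graph :=
  @Graph (cF s t : finType) (cV s t : finType)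
    (fun f => cproj s t (gd G (val f)))
    (fun f => insubd f (gi G (val f))).

Definition contr_m (G : graph) (s t : gF G) : morph G (contract s t) :=
  @Morph G (contract s t) (cproj s t) (fun f => val f) (swap s t).

Definition vcontr (X : graph) (s t : gF X) : morph X (@contract (graft s t) s t) :=
  mcomp (@contr_m (graft s t) s t) (graft_m s t).

Inductive pure : forall X Y : graph, morph X Y -> Prop :=
| pure_id X : is_aggregate X -> pure (mid X)
| pure_step X Y (p : morph X Y) (s t : gF Y) :
    pure p -> is_aggregate Y -> s != t -> pure (mcomp (vcontr s t) p).

Definition adj (G : graph) : rel (gV G) :=
  fun v w => [exists f, [&& gd G f == v, gd G (gi G f) == w & gi G f != f]].

Definition compset (G : graph) (v : gV G) : {set gV G} := [set w | connect (@adj G) v w].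

Definition comp (G : graph) := {C : {set gV G} | [exists v, C == compset v]}.

Lemma compset_comp (G : graph) (v : gV G) : [exists w, compset v == compset w].
Proof. by apply/existsP; exists v. Qed.

Definition compof (G : graph) (v : gV G) : comp G := exist _ (compset v) (compset_comp v).

Definition outer (G : graph) := {f : gF G | gi G f == f}.

Definition tquot (G : graph) : graph :=
  @Graph (outer G : finType) (comp G : finType)
    (fun f => compof (gd G (val f))) (fun f => f).

(* i_G : agg(G) -> G, composite of graftings of all edges *)
Definition i_m (G : graph) : morph (agg G) G :=
  @Morph (agg G) G (fun v : gV G => v) (fun f : gF G => f) (fun f : gF G => f).

(* c_G : G -> G/G, composite of contractions of all edges *)
Definition c_m (G : graph) : morph G (tquot G) :=
  @Morph G (tquot G) (@compof G) (fun f => val f) (gi G).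

Definition v_m (G : graph) : morph (agg G) (tquot G) := mcomp (c_m G) (i_m G).

(* phi (with source X) coincides with sigma \circ v_{ghost phi}, whose source is
   agg(ghost phi) (which has the same flags and vertices as X). *)
Definition agrees_with_v X Y (p : morph X Y) (sigma : morph (tquot (ghost p)) Y) : Prop :=
  let chi := mcomp sigma (v_m (ghost p)) in
  [/\ forall v : gV X, mV p v = mV chi v,
      forall f : gF Y, mF p f = mF chi f &
      forall f : gF X, mi p f = mi chi f].

Definition morph_eq X Y (p q : morph X Y) : Prop :=
  [/\ forall v, mV p v = mV q v, forall f, mF p f = mF q f & forall f, mi p f = mi q f].

From Pilot Require Import Defs.
From mathcomp Require Import all_boot.
From Stdlib Require Import FunctionalExtensionality.

(* Every virtual contraction preserves the following invariant of p : X -> Y: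
   X and Y are aggregates, phi^F identifies the flags of Y with the fixed
   points of the ghost involution, and the fibres of phi_V are the connected
   components of the ghost graph.  So the vertices and flags of Y are the
   components and outer flags of the ghost graph, i.e. Y is its total
   contraction with phi = v_ghost, and both are determined by the ghost
   involution alone, whence uniqueness. *)

Set Implicit Arguments. Unset Strict Implicit. Unset Printing Implicit Defensive.

Lemma factor_surj (A : choiceType) (B C : eqType) (f : A -> B) (g : A -> C) :
  (forall b, exists a, f a = b) -> (forall a a', f a = f a' -> g a = g a') ->
  {h : B -> C | forall a, h (f a) = g a}.
Proof.
move=> f_surj fg; have pre b : exists a, f a == b by have [a <-] := f_surj b; exists a.
by exists (fun b => g (xchoose (pre b))) => a; apply/fg/eqP/(xchooseP (pre _)).
Qed.

Lemma bij_factor_surj (A : choiceType) (B C : eqType) (f : A -> B) (g : A -> C) :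
  (forall b, exists a, f a = b) -> (forall c, exists a, g a = c) ->
  (forall a a', (f a == f a') = (g a == g a')) ->
  {h : B -> C | bijective h & forall a, h (f a) = g a}.
Proof.
move=> f_surj g_surj fg.
have [h hf] : {h : B -> C | forall a, h (f a) = g a}.
  by apply: factor_surj => // a a' /eqP; rewrite fg => /eqP.
have [h' h'g] : {h' : C -> B | forall a, h' (g a) = f a}.
  by apply: factor_surj => // a a' /eqP; rewrite -fg => /eqP.
exists h => //; exists h' => [b | c].
  by have [a <-] := f_surj b; rewrite hf h'g.
by have [a <-] := g_surj c; rewrite h'g hf.
Qed.

Lemma factor_inj (A : eqType) (B C : choiceType) (u : B -> A) (v : C -> A) :
  (forall c, exists b, u b = v c) -> {k : C -> B | forall c, u (k c) = v c}.
Proof.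
move=> uv; have pre c : exists b, u b == v c by have [b <-] := uv c; exists b.
by exists (fun c => xchoose (pre c)) => c; apply/eqP/(xchooseP (pre c)).
Qed.

Lemma bij_factor_inj (A : eqType) (B C : choiceType) (u : B -> A) (v : C -> A) :
  injective u -> injective v ->
  (forall c, exists b, u b = v c) -> (forall b, exists c, v c = u b) ->
  {k : C -> B | bijective k & forall c, u (k c) = v c}.
Proof.
move=> u_inj v_inj uv vu.
have [k uk] := factor_inj uv; have [k' vk'] := factor_inj vu.
exists k => //; exists k' => [c | b]; first by apply: v_inj; rewrite vk' uk.
by apply: u_inj; rewrite uk vk'.
Qed.

Lemma mi_mcomp_mF X Y Z (q : morph Y Z) (p : morph X Y) g :
  injective (mF p) -> mi (mcomp q p) (mF p g) = mF p (mi q g).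
Proof.
by move=> p_inj /=; case: pickP => [g' /eqP/p_inj -> // | /(_ g)]; rewrite eqxx.
Qed.

Lemma mi_mcomp_out X Y Z (q : morph Y Z) (p : morph X Y) f :
  ~~ inim p f -> mi (mcomp q p) f = mi p f.
Proof. by move=> /existsPn out /=; case: pickP => // g; rewrite (negbTE (out g)). Qed.

Lemma mi_mcomp_idl X Y Z (q : morph Y Z) (p : morph X Y) :
  (forall f, mi q f = f) -> (forall g, mi p (mF p g) = mF p g) ->
  mi (mcomp q p) =1 mi p.
Proof. by move=> q_id p_fix f /=; case: pickP => // g /eqP <-; rewrite q_id p_fix. Qed.

Lemma mi_v_m (G : graph) f : mi (v_m G) f = gi G f.
Proof. by have /= -> := mi_mcomp_mF (c_m G) (p := i_m G) f (fun _ _ => id). Qed.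

Lemma iso_of_bij (X Y : graph) (fV : gV X -> gV Y) (fF : gF Y -> gF X) :
  (forall f, gi X f = f) -> bijective fV -> bijective fF ->
  (forall g, fV (gd X (fF g)) = gd Y g) -> is_iso (@Morph X Y fV fF id).
Proof.
move=> X_agg [fV' fVK fV'K] [fF' fFK fF'K] fV_gd.
have all_in f : inim (@Morph X Y fV fF id) f.
  by apply/existsP; exists (fF' f); rewrite /= fF'K.
split; [split=> // | by exists fV' | by exists fF'].
- by move=> y; exists (fV' y); rewrite /= fV'K.
- exact: can_inj fFK.
- by split=> [f | | f | f | g]; rewrite ?all_in //= X_agg eqxx.
Qed.

Lemma swap_fixE (T : eqType) (s t g : T) :
  s != t -> (swap s t g == g) = (g != s) && (g != t).
Proof.
rewrite /swap => st; case: (g =P s) => [-> | _]; first by rewrite eq_sym (negbTE st).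
by case: (g =P t) => [-> | _]; rewrite ?(negbTE st) ?eqxx.
Qed.

Lemma swapK (T : eqType) (s t : T) : involutive (swap s t).
Proof.
move=> f; rewrite /swap; case: (f =P s) => [-> | fs]; first by rewrite eqxx; case: eqP.
case: (f =P t) => [-> | ft]; first by rewrite eqxx.
by case: (f =P s) fs => // _ _; case: eqP ft.
Qed.

Lemma val_cproj (G : graph) (s t : gF G) v :
  val (cproj s t v) = if v == gd G t then gd G s else v.
Proof.
rewrite /cproj val_insubd; case: (v =P gd G t) => [_ | /eqP vt] /=.
  by rewrite if_same.
by rewrite vt.
Qed.

Lemma cproj_val (G : graph) (s t : gF G) (z : cV s t) : cproj s t (val z) = z.
Proof.
apply: val_inj; rewrite val_cproj; case: eqP => // zt.
by have := valP z; rewrite /= zt eqxx /= => /eqP.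
Qed.

Lemma cproj_gd_swap (G : graph) (s t : gF G) g :
  cproj s t (gd G (swap s t g)) = cproj s t (gd G g).
Proof.
apply: val_inj; rewrite !val_cproj /swap.
case: (g =P s) => [-> | _]; first by rewrite eqxx; case: ifP => // /eqP.
by case: (g =P t) => [-> | _]; rewrite ?eqxx //; case: ifP => // /eqP.
Qed.

Lemma cproj_eq (G : graph) (s t : gF G) a b : cproj s t a = cproj s t b ->
  [\/ a = b, a = gd G s /\ b = gd G t | a = gd G t /\ b = gd G s].
Proof.
move/(congr1 val); rewrite !val_cproj.
case: (a =P gd G t) => [-> | _]; case: (b =P gd G t) => [-> | _] ab.
- exact: Or31.
- exact: Or33.
- exact: Or32.
- exact: Or31.
Qed.

Lemma adj_sym (G : graph) : involutive (gi G) -> symmetric (@adj G).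
Proof.
move=> giK; apply: symmetric_from_pre => v w /existsP [f /and3P [/eqP <- /eqP <- nf]].
by apply/existsP; exists (gi G f); rewrite giK !eqxx eq_sym.
Qed.

Lemma compof_surj (G : graph) (C : Defs.comp G) : exists v, compof v = C.
Proof. by have [v /eqP Cv] := existsP (valP C); exists v; apply: val_inj. Qed.

Lemma compof_eqE (G : graph) : connect_sym (@adj G) ->
  forall v w, (compof v == compof w) = connect (@adj G) v w.
Proof.
move=> symG v w; rewrite -val_eqE /=; apply/eqP/idP => [vw | /(same_connect symG) vw].
  have : w \in compset w by rewrite inE.
  by rewrite -vw inE.
by apply/setP => z; rewrite !inE vw.
Qed.

Record contraction_spec X Y (p : morph X Y) : Prop := {
  src_agg : forall f, gi X f = f;
  tgt_agg : forall f, gi Y f = f;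
  miK : involutive (mi p);
  mi_mF : forall g, mi p (mF p g) = mF p g;
  mi_fix : forall f, mi p f = f -> exists g, mF p g = f;
  mF_inj : injective (mF p);
  mV_surj : forall y, exists x, mV p x = y;
  mV_gd_mF : forall g, mV p (gd X (mF p g)) = gd Y g;
  mV_gd_mi : forall f, mV p (gd X (mi p f)) = mV p (gd X f);
  mV_connect : forall v w, mV p v = mV p w -> connect (@adj (ghost p)) v w }.

Lemma contraction_spec_id X : is_aggregate X -> contraction_spec (mid X).
Proof.
case=> _ X_agg; split=> // [f _ | y | v w /= ->]; by [exists f | exists y |].
Qed.

Section VirtualContraction.

Variables (X Y : graph) (p : morph X Y) (s t : gF Y).
Hypotheses (Hp : contraction_spec p) (st : s != t).
Let r := mcomp (vcontr s t) p.

Lemma mV_step v : mV r v = @cproj (graft s t) s t (mV p v).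
Proof. by []. Qed.

Lemma mF_step g : mF r g = mF p (val g).
Proof. by []. Qed.

Lemma mi_vcontr g : mi (vcontr s t) g = swap s t g.
Proof.
by have /= -> := mi_mcomp_mF (@contr_m (graft s t) s t) (p := graft_m s t) g (fun _ _ => id).
Qed.

Lemma mi_step_mF g : mi r (mF p g) = mF p (swap s t g).
Proof. by rewrite mi_mcomp_mF ?mi_vcontr //; exact: mF_inj Hp. Qed.

Lemma mi_step_out f : ~~ inim p f -> mi r f = mi p f.
Proof. exact: mi_mcomp_out. Qed.

Lemma notin_inim_mi f : ~~ inim p f -> ~~ inim p (mi p f).
Proof.
apply: contra => /existsP [g /eqP gf]; apply/existsP; exists g.
by rewrite -[f](miK Hp) -gf (mi_mF Hp).
Qed.

Lemma mi_stepK : involutive (mi r).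
Proof.
move=> f; case: (boolP (inim p f)) => [/existsP [g /eqP <-] | out].
  by rewrite !mi_step_mF swapK.
by rewrite !mi_step_out ?miK ?notin_inim_mi.
Qed.

Lemma adj_step : subrel (@adj (ghost p)) (@adj (ghost r)).
Proof.
move=> a b /existsP [f /and3P [fa fb nf]]; apply/existsP; exists f.
have out : ~~ inim p f by apply: contra nf => /existsP [g /eqP <-]; rewrite /= (mi_mF Hp).
by rewrite -[gi (ghost r) f]/(mi r f) mi_step_out //; apply/and3P.
Qed.

Lemma connect_step a b : mV p a = mV p b -> connect (@adj (ghost r)) a b.
Proof. by move/(mV_connect Hp); apply: connect_sub => v w /adj_step/connect1. Qed.

Lemma connect_step_bridge :
  connect (@adj (ghost r)) (gd X (mF p s)) (gd X (mF p t)).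
Proof.
apply/connect1/existsP; exists (mF p s).
have -> : gi (ghost r) (mF p s) = mF p t.
  by rewrite -[gi _ _]/(mi r (mF p s)) mi_step_mF /swap eqxx.
by rewrite !eqxx (inj_eq (mF_inj Hp)) eq_sym.
Qed.

(* [cproj] glues the vertices [gd s] and [gd t] of Y; their fibres under
   [mV p] are joined in the new ghost graph by the edge {mF p s, mF p t}. *)
Lemma mV_step_connect a b :
  mV r a = mV r b -> connect (@adj (ghost r)) a b.
Proof.
have bridge u v : mV p u = gd Y s -> mV p v = gd Y t -> connect (@adj (ghost r)) u v.
  move=> us vt.
  have u_s : mV p u = mV p (gd X (mF p s)) by rewrite us (mV_gd_mF Hp).
  have t_v : mV p (gd X (mF p t)) = mV p v by rewrite vt (mV_gd_mF Hp).
  exact: connect_trans (connect_step u_s) (connect_trans connect_step_bridge (connect_step t_v)).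
have symr := sym_connect_sym (@adj_sym (ghost r) mi_stepK).
case/cproj_eq => [| [] | [ut vs]]; [exact: connect_step | exact: bridge |].
by rewrite symr; exact: bridge.
Qed.

Lemma contraction_spec_step : contraction_spec r.
Proof.
split.
- exact: src_agg Hp.
- move=> g; case/andP: (valP g) => gs gt.
  by rewrite /= (negbTE gs) (negbTE gt) (tgt_agg Hp) valKd.
- exact: mi_stepK.
- move=> [g g_st]; rewrite mF_step mi_step_mF /=.
  by congr (mF p _); apply/eqP; rewrite swap_fixE.
- move=> f; case: (boolP (inim p f)) => [/existsP [g /eqP <-] | out].
    rewrite mi_step_mF => /(mF_inj Hp)/eqP; rewrite swap_fixE // => g_st.
    by exists (exist _ g g_st).
  rewrite mi_step_out // => /(mi_fix Hp) [g gf].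
  by case/negP: out; apply/existsP; exists g; rewrite gf.
- by move=> g h; rewrite !mF_step => /(mF_inj Hp)/val_inj.
- by move=> z; have [x xz] := mV_surj Hp (val z); exists x; rewrite mV_step xz cproj_val.
- by move=> g; rewrite mV_step mF_step (mV_gd_mF Hp).
- move=> f; case: (boolP (inim p f)) => [/existsP [g /eqP <-] | out].
    by rewrite mi_step_mF !mV_step !(mV_gd_mF Hp); exact: cproj_gd_swap.
  by rewrite mi_step_out // !mV_step (mV_gd_mi Hp).
- exact: mV_step_connect.
Qed.

End VirtualContraction.

Lemma pure_contraction_spec X Y (p : morph X Y) : pure p -> contraction_spec p.
Proof.
elim=> {X Y p} [X /contraction_spec_id // | X Y p s t _ Hp _ st].
exact: contraction_spec_step.
Qed.

Section ContractionSpec.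

Variables (X Y : graph) (p : morph X Y).
Hypothesis Hp : contraction_spec p.

Lemma connect_ghostE v w : connect (@adj (ghost p)) v w = (mV p v == mV p w).
Proof.
apply/idP/eqP => [vw | /(mV_connect Hp) //].
have mV_closed : closed (@adj (ghost p)) [pred u | mV p u == mV p v].
  by move=> a b /existsP [f /and3P [/eqP <- /eqP <- _]]; rewrite !inE /= (mV_gd_mi Hp).
by have := closed_connect mV_closed vw; rewrite !inE eqxx => /esym/eqP.
Qed.

Lemma compof_ghost_eqE v w : (@compof (ghost p) v == compof w) = (mV p v == mV p w).
Proof. by rewrite compof_eqE ?connect_ghostE //; apply/sym_connect_sym/adj_sym/(miK Hp). Qed.

Lemma agg_ghost : agg (ghost p) = X.
Proof.
move: p Hp; case: X => F V d i q Hq; rewrite /agg /=; congr Graph.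
apply: functional_extensionality => f; exact/esym/(src_agg Hq).
Qed.

Lemma ghost_quotient_iso :
  exists sigma : morph (tquot (ghost p)) Y, is_iso sigma /\ agrees_with_v sigma.
Proof.
have [sV sV_bij sV_compof] : {sV : gV (tquot (ghost p)) -> gV Y |
    bijective sV & forall v, sV (compof v) = mV p v}.
  exact: bij_factor_surj (@compof_surj (ghost p)) (mV_surj Hp) compof_ghost_eqE.
have outer_mF g : exists o : outer (ghost p), val o = mF p g.
  by exists (exist _ (mF p g) (introT eqP (mi_mF Hp g))).
have mF_outer (o : outer (ghost p)) : exists g, mF p g = val o.
  exact/(mi_fix Hp)/eqP/(valP o).
have [sF sF_bij val_sF] : {sF : gF Y -> gF (tquot (ghost p)) |
    bijective sF & forall g, val (sF g) = mF p g}.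
  exact: bij_factor_inj val_inj (mF_inj Hp) outer_mF mF_outer.
exists (Morph sV sF id); split.
  by apply: iso_of_bij => // g; rewrite /= val_sF sV_compof (mV_gd_mF Hp).
split=> [v | g | f]; [by rewrite /= sV_compof | by rewrite /= val_sF |].
by rewrite mi_mcomp_idl ?mi_v_m // => o; rewrite mi_v_m; exact/eqP/(valP o).
Qed.

End ContractionSpec.

Lemma contraction_spec_unique X Y Y' (p : morph X Y) (q : morph X Y') :
  contraction_spec p -> contraction_spec q -> mi q =1 mi p ->
  exists tau : morph Y Y', is_iso tau /\ morph_eq q (mcomp tau p).
Proof.
move=> Hp Hq qp.
have ker_pq v w : (mV p v == mV p w) = (mV q v == mV q w).
  rewrite -(connect_ghostE Hp) -(connect_ghostE Hq); apply: eq_connect => a b.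
  by apply: eq_existsb => f; rewrite /= qp.
have [tV tV_bij tV_mV] := bij_factor_surj (mV_surj Hp) (mV_surj Hq) ker_pq.
have q_in_p g' : exists g, mF p g = mF q g'.
  by apply: (mi_fix Hp); rewrite -qp (mi_mF Hq).
have p_in_q g : exists g', mF q g' = mF p g.
  by apply: (mi_fix Hq); rewrite qp (mi_mF Hp).
have [tF tF_bij mF_tF] := bij_factor_inj (mF_inj Hp) (mF_inj Hq) q_in_p p_in_q.
exists (Morph tV tF id); split.
  apply: iso_of_bij => // [| g]; first exact: tgt_agg Hp.
  by rewrite /= -(mV_gd_mF Hp) tV_mV mF_tF (mV_gd_mF Hq).
split=> [v | g | f]; [by rewrite /= tV_mV | by rewrite /= mF_tF |].
by rewrite mi_mcomp_idl ?qp //; exact: mi_mF Hp.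
Qed.

Unset Implicit Arguments.

Theorem corollary2p10 (X Y : graph) (p : morph X Y) :
  pure p ->
  [/\ agg (ghost p) = X,
      exists sigma : morph (tquot (ghost p)) Y, is_iso sigma /\ agrees_with_v sigma &
      forall (Y' : graph) (q : morph X Y'), pure q -> (forall f, mi q f = mi p f) ->
        exists tau : morph Y Y', is_iso tau /\ morph_eq q (mcomp tau p)].
Proof.
move=> /pure_contraction_spec Hp; split.
- exact: agg_ghost.
- exact: ghost_quotient_iso.
- by move=> Y' q /pure_contraction_spec Hq; exact: contraction_spec_unique.
Qed.
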